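(* Let $\tau_1(x)=\frac{x+1}{x+3}$ and $\tau_2(x)=\frac{2}{4-x}$ on $[0,1]$. For $t>0$ let $A_1(y)=\frac12\left(\log\frac{2}{(y-1)^2}+\log 2\right)$ (used on $\tau_1([0,1])=[1/3,1/2]$) and $A_2(y,t)=\frac12\left(\log\frac{2}{y^2}+\log(2t^2)\right)$ (used on $\tau_2([0,1])=[1/2,2/3]$). Let $V_1(x,t)=\log\left(t\left(2+\sqrt2-\frac{x}{\sqrt2}\right)\right)$, $V_2(x,t)=\log(x+1+\sqrt2)$ and $V(x,t)=\max\{V_1(x,t),V_2(x,t)\}$. If $0<t\le t_1:=\frac{4(4+3\sqrt2)}{18+13\sqrt2}$, then for every $x\in[1/3,2/3]$, $$V(x,t)+\log(2+\sqrt2)=\max\{A_1(\tau_1(x))+V(\tau_1(x),t),\,A_2(\tau_2(x),t)+V(\tau_2(x),t)\},$$ so $V(\cdot,t)$ is a calibrated subaction with maximal value $m(A,t)=\log(2+\sqrt2)$.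
   Context: This potential is associated with the pair of matrices $\begin{pmatrix}2&1\\2&2\end{pmatrix}$ and $t\begin{pmatrix}2&2\\1&2\end{pmatrix}$, whose projective actions on $[0,1]$ are $\tau_1,\tau_2$. *)

From Stdlib Require Import Reals.
Open Scope R_scope.

Definition tau1 (x : R) : R := (x + 1) / (x + 3).
Definition tau2 (x : R) : R := 2 / (4 - x).

Definition Apot1 (y : R) : R := / 2 * (ln (2 / (y - 1) ^ 2) + ln 2).
Definition Apot2 (y t : R) : R := / 2 * (ln (2 / y ^ 2) + ln (2 * t ^ 2)).

Definition V1 (x t : R) : R := ln (t * (2 + sqrt 2 - x / sqrt 2)).
Definition V2 (x t : R) : R := ln (x + 1 + sqrt 2).
Definition V (x t : R) : R := Rmax (V1 x t) (V2 x t).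

Definition t1 : R := 4 * (4 + 3 * sqrt 2) / (18 + 13 * sqrt 2).

(* Since A1 (tau1 x) = ln (x + 3) and A2 (tau2 x) t = ln (t (4 - x)),
   both sides are logarithms of maxima of functions affine in x:
     (2 + √2) e^V(x) = max (d, c),   (x + 3) e^V(tau1 x) = max (a, c),
     t (4 - x) e^V(tau2 x) = max (b, d),
   where c = (2 + √2) x + 4 + 3√2,  d = t (6 + 4√2 - (1 + √2) x),
         a = t ((2 + √2/2) x + 6 + 5√2/2),  b = t² (8 + 3√2 - (2 + √2) x).
   So V2 ∘ tau1 reproduces V2 and V1 ∘ tau2 reproduces V1, and the identity reduces
   to a <= max (d, c) and b <= max (d, c), which is where t <= t1 is used. *)

From Stdlib Require Import Reals Lra Nsatz.
Open Scope R_scope.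

Lemma Rmax_ln (a b : R) : 0 < a -> 0 < b -> Rmax (ln a) (ln b) = ln (Rmax a b).
Proof.
  intros Ha Hb. destruct (Rle_or_lt a b) as [Hab | Hba].
  - rewrite (Rmax_right a b Hab). apply Rmax_right.
    destruct Hab as [Hlt | ->]; [left; now apply ln_increasing | apply Rle_refl].
  - rewrite (Rmax_left a b (Rlt_le _ _ Hba)).
    apply Rmax_left, Rlt_le, ln_increasing; assumption.
Qed.

Lemma Rmax_dominated (a b c d : R) : a <= Rmax d c -> b <= Rmax d c ->
  Rmax (Rmax a c) (Rmax b d) = Rmax d c.
Proof. intros; unfold Rmax in *; repeat destruct Rle_dec; lra. Qed.

Lemma half_ln_pow2 (u : R) : 0 < u -> / 2 * ln (u ^ 2) = ln u.
Proof. intros Hu. rewrite ln_pow by assumption. simpl INR. field. Qed.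

Lemma sqrt2_sq : sqrt 2 * sqrt 2 = 2.
Proof. apply sqrt_sqrt; lra. Qed.

Lemma sqrt2_bounds : 1.41 < sqrt 2 < 1.42.
Proof.
  assert (Hs := sqrt2_sq). assert (Hpos : 0 < sqrt 2) by (apply sqrt_lt_R0; lra).
  split; nra.
Qed.

Lemma sqrt2_inv : sqrt 2 * / sqrt 2 = 1.
Proof. apply Rinv_r. pose proof sqrt2_bounds; lra. Qed.

(* [nsatz] treats [/ sqrt 2] and [/ 2] as atoms; the inverse identities cancel them. *)
Ltac sqrt2_nsatz :=
  pose proof sqrt2_sq; pose proof sqrt2_inv;
  assert (2 * / 2 = 1) by lra; unfold Rdiv; nsatz.

Lemma t1_eq : t1 = 4 * (3 - sqrt 2) / 7.
Proof.
  assert ((18 + 13 * sqrt 2) * / (18 + 13 * sqrt 2) = 1)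
    by (apply Rinv_r; pose proof sqrt2_bounds; lra).
  assert (7 * / 7 = 1) by lra.
  unfold t1. sqrt2_nsatz.
Qed.

Lemma tau1_in_01 (x : R) : 0 <= x <= 1 -> 0 <= tau1 x <= 1.
Proof.
  intros Hx. unfold tau1. split.
  - apply Rlt_le, Rdiv_lt_0_compat; lra.
  - apply Rmult_le_reg_r with (x + 3); [lra |]. field_simplify; lra.
Qed.

Lemma tau2_in_01 (x : R) : 0 <= x <= 1 -> 0 <= tau2 x <= 1.
Proof.
  intros Hx. unfold tau2. split.
  - apply Rlt_le, Rdiv_lt_0_compat; lra.
  - apply Rmult_le_reg_r with (4 - x); [lra |]. field_simplify; lra.
Qed.

Lemma Apot1_tau1 (x : R) : -3 < x -> Apot1 (tau1 x) = ln (x + 3).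
Proof.
  intros Hx. unfold Apot1, tau1.
  replace (2 / ((x + 1) / (x + 3) - 1) ^ 2) with ((x + 3) ^ 2 / 2)
    by (field; split; lra).
  rewrite <- ln_mult by (try apply Rdiv_lt_0_compat; try apply pow_lt; lra).
  replace ((x + 3) ^ 2 / 2 * 2) with ((x + 3) ^ 2) by field.
  apply half_ln_pow2; lra.
Qed.

Lemma Apot2_tau2 (x t : R) : x < 4 -> 0 < t -> Apot2 (tau2 x) t = ln (t * (4 - x)).
Proof.
  intros Hx Ht. unfold Apot2, tau2.
  replace (2 / (2 / (4 - x)) ^ 2) with ((4 - x) ^ 2 / 2) by (field; lra).
  rewrite <- ln_mult
    by (try apply Rdiv_lt_0_compat; try apply Rmult_lt_0_compat; try apply pow_lt; lra).
  replace ((4 - x) ^ 2 / 2 * (2 * t ^ 2)) with ((t * (4 - x)) ^ 2) by field.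
  apply half_ln_pow2, Rmult_lt_0_compat; lra.
Qed.

Definition expV (x t : R) : R := Rmax (t * (2 + sqrt 2 - x / sqrt 2)) (x + 1 + sqrt 2).

Lemma expV_pos (x t : R) : 0 <= x <= 1 -> 0 < expV x t.
Proof.
  intros Hx. pose proof sqrt2_bounds.
  apply Rlt_le_trans with (x + 1 + sqrt 2); [lra | apply Rmax_r].
Qed.

Lemma V_eq_ln_expV (x t : R) : 0 <= x <= 1 -> 0 < t -> V x t = ln (expV x t).
Proof.
  intros Hx Ht. pose proof sqrt2_bounds.
  assert (x / sqrt 2 = x * sqrt 2 / 2) by sqrt2_nsatz.
  unfold V, V1, V2, expV. apply Rmax_ln; [apply Rmult_lt_0_compat |]; nra.
Qed.

Lemma expV_scaled (x t : R) :
  (2 + sqrt 2) * expV x t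
  = Rmax (t * (6 + 4 * sqrt 2 - (1 + sqrt 2) * x)) ((2 + sqrt 2) * x + 4 + 3 * sqrt 2).
Proof.
  pose proof sqrt2_bounds. unfold expV.
  rewrite <- RmaxRmult by lra. f_equal; sqrt2_nsatz.
Qed.

Lemma expV_tau1 (x t : R) : -3 < x ->
  (x + 3) * expV (tau1 x) t
  = Rmax (t * ((2 + sqrt 2 / 2) * x + 6 + 5 * sqrt 2 / 2)) ((2 + sqrt 2) * x + 4 + 3 * sqrt 2).
Proof.
  intros Hx. assert ((x + 3) * / (x + 3) = 1) by (apply Rinv_r; lra).
  unfold expV, tau1. rewrite <- RmaxRmult by lra. f_equal; sqrt2_nsatz.
Qed.

Lemma expV_tau2 (x t : R) : x < 4 -> 0 <= t ->
  t * (4 - x) * expV (tau2 x) t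
  = Rmax (t * t * (8 + 3 * sqrt 2 - (2 + sqrt 2) * x)) (t * (6 + 4 * sqrt 2 - (1 + sqrt 2) * x)).
Proof.
  intros Hx Ht. assert ((4 - x) * / (4 - x) = 1) by (apply Rinv_r; lra).
  unfold expV, tau2. rewrite <- RmaxRmult by (apply Rmult_le_pos; lra).
  f_equal; sqrt2_nsatz.
Qed.

(* Below x = √2 - 1 the first branch dominates for every t >= 0; above it the second
   one does as long as t <= t1, with equality at x = √2 - 1 and t = t1. *)
Lemma tau1_branch_le (x t : R) : 0 <= t <= t1 ->
  t * ((2 + sqrt 2 / 2) * x + 6 + 5 * sqrt 2 / 2)
  <= Rmax (t * (6 + 4 * sqrt 2 - (1 + sqrt 2) * x)) ((2 + sqrt 2) * x + 4 + 3 * sqrt 2).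
Proof.
  intros Ht. rewrite t1_eq in Ht. pose proof sqrt2_sq; pose proof sqrt2_bounds.
  assert (sqrt 2 * sqrt 2 * x = 2 * x) by (rewrite sqrt2_sq; ring).
  destruct (Rle_or_lt x (sqrt 2 - 1)) as [Hx | Hx].
  - eapply Rle_trans; [| apply Rmax_l]. apply Rmult_le_compat_l; nra.
  - eapply Rle_trans; [| apply Rmax_r].
    apply Rle_trans with (4 * (3 - sqrt 2) / 7 * ((2 + sqrt 2 / 2) * x + 6 + 5 * sqrt 2 / 2)).
    + apply Rmult_le_compat_r; nra.
    + nra.
Qed.

Lemma tau2_branch_le (x t : R) : 0 <= x <= 1 -> 0 <= t <= t1 ->
  t * t * (8 + 3 * sqrt 2 - (2 + sqrt 2) * x)
  <= Rmax (t * (6 + 4 * sqrt 2 - (1 + sqrt 2) * x)) ((2 + sqrt 2) * x + 4 + 3 * sqrt 2).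
Proof.
  intros Hx Ht. rewrite t1_eq in Ht. pose proof sqrt2_sq; pose proof sqrt2_bounds.
  eapply Rle_trans; [| apply Rmax_l].
  rewrite Rmult_assoc. apply Rmult_le_compat_l; [lra |].
  apply Rle_trans with (4 * (3 - sqrt 2) / 7 * (8 + 3 * sqrt 2 - (2 + sqrt 2) * x)).
  - apply Rmult_le_compat_r; nra.
  - nra.
Qed.

Theorem mainTheorem4 (t : R) (ht0 : 0 < t) (ht1 : t <= t1) :
  forall x : R, 1 / 3 <= x <= 2 / 3 ->
    V x t + ln (2 + sqrt 2) =
    Rmax (Apot1 (tau1 x) + V (tau1 x) t) (Apot2 (tau2 x) t + V (tau2 x) t).
Proof.
  intros x Hx.
  assert (Hx01 : 0 <= x <= 1) by lra.
  pose proof (tau1_in_01 x Hx01); pose proof (tau2_in_01 x Hx01); pose proof sqrt2_bounds.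
  rewrite Apot1_tau1, Apot2_tau2, !V_eq_ln_expV by lra.
  rewrite Rplus_comm, <- !ln_mult
    by (try apply expV_pos; try apply Rmult_lt_0_compat; lra).
  rewrite Rmax_ln by (apply Rmult_lt_0_compat; try apply Rmult_lt_0_compat; try apply expV_pos; lra).
  rewrite expV_scaled, expV_tau1, expV_tau2 by lra.
  rewrite Rmax_dominated; [reflexivity | apply tau1_branch_le | apply tau2_branch_le]; lra.
Qed.
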